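(* Let $\mathcal{M}=(S,E,T)$ be a trivially parametric Markov chain satisfying the standing assumptions below, let $s\in S$ and let $A\subseteq S$ be a never-worse equivalence class. If $s$ almost-surely reaches $A$, then $s\in A$.
   Context: A trivially parametric Markov chain $\mathcal{M}=(S,E,T)$ consists of a finite set of states $S$, targets $T=\{\mathit{fin},\mathit{fail}\}$ with no outgoing edges, and edges $E\subseteq(S\setminus T)\times S$. A graph-preserving valuation assigns to each non-target $s$ a full-support probability distribution on its successor set $sE$; write $P_{\mathsf{val}}(s)$ for the probability of reaching $\mathit{fin}$ from $s$ in the resulting Markov chain. For $s,s'\in S$, $s\sim s'$ (never-worse equivalent) iff $P_{\mathsf{val}}(s)=P_{\mathsf{val}}(s')$ for every graph-preserving valuation; equivalence classes are the classes of $\sim$. $s$ almost-surely reaches $A$ if the probability of reaching $A$ from $s$ is $1$ for every graph-preserving valuation. Standing assumptions: the equivalence classes of $\mathit{fin}$ and $\mathit{fail}$ are $\{\mathit{fin}\}$ and $\{\mathit{fail}\}$; no state has a self-loop; every non-target state has at least two successors. *)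

From HB Require Import structures.
From mathcomp Require Import all_boot all_order all_algebra.
From mathcomp Require Import all_classical all_reals all_analysis.
Set Implicit Arguments. Unset Strict Implicit. Unset Printing Implicit Defensive.
Import Order.TTheory GRing.Theory Num.Theory numFieldNormedType.Exports.
Local Open Scope ring_scope.

Section PMC.
Variables (R : realType) (S : finType) (E : rel S) (fin fail : S).

Definition target (s : S) : bool := (s == fin) || (s == fail).

Definition graph_preserving (val : S -> S -> R) : Prop :=
  forall s, ~~ target s ->
    [/\ (forall t, E s t -> 0 < val s t),
        (forall t, ~~ E s t -> val s t = 0) &
        \sum_(t : S) val s t = 1].

(* probability of reaching A within n steps in the Markov chain given by val
   (targets are absorbing: they have no outgoing edges) *)
Fixpoint reachn (val : S -> S -> R) (A : pred S) (n : nat) (s : S) : R :=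
  if s \in A then 1 else
  match n with
  | 0 => 0
  | n'.+1 => if target s then 0 else \sum_(t : S) val s t * reachn val A n' t
  end.

(* probability of (eventually) reaching A: limit of the nondecreasing,
   bounded sequence of step-bounded reachability probabilities *)
Definition reach_prob (val : S -> S -> R) (A : pred S) (s : S) : R :=
  limn (fun n => reachn val A n s).

Definition Pval (val : S -> S -> R) (s : S) : R := reach_prob val (pred1 fin) s.

Definition nw_equiv (s s' : S) : Prop :=
  forall val, graph_preserving val -> Pval val s = Pval val s'.

Definition nw_class (A : {set S}) : Prop :=
  exists s0, forall t, t \in A <-> nw_equiv s0 t.

Definition as_reaches (s : S) (A : {set S}) : Prop :=
  forall val, graph_preserving val -> reach_prob val (mem A) s = 1.

Definition standing_assumptions : Prop :=
  [/\ fin != fail,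
      (forall t, ~~ E fin t) /\ (forall t, ~~ E fail t),
      (forall s, nw_equiv s fin -> s = fin) /\ (forall s, nw_equiv s fail -> s = fail),
      (forall s, ~~ E s s) &
      (forall s, ~~ target s -> 1 < #|[set t | E s t]|)%N].

End PMC.

(* Fix a graph-preserving valuation and let c be the common value of P_val on
   the class A.  Off the targets P_val is harmonic, so the deviation
   |P_val(t) - c| is subharmonic there; it vanishes on A and is at most 1
   everywhere, hence by induction on n it is bounded by the probability of
   not reaching A within n steps.  If s reaches A almost surely, letting n go
   to infinity gives P_val(s) = c for every valuation, i.e. s ~ A. *)
From Pilot Require Import Defs.
From mathcomp Require Import all_boot all_order all_algebra.
From mathcomp Require Import all_classical all_reals all_analysis.
From mathcomp Require Import lra.
Set Implicit Arguments. Unset Strict Implicit. Unset Printing Implicit Defensive.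
Import Order.TTheory GRing.Theory Num.Theory numFieldNormedType.Exports.
Local Open Scope ring_scope.
Local Open Scope classical_set_scope.

Section Valuation.
Variables (R : realType) (S : finType) (E : rel S) (fin fail : S).
Variable val : S -> S -> R.
Hypothesis val_gp : graph_preserving E fin fail val.

Local Notation target := (target fin fail).
Local Notation reachn := (reachn fin fail val).
Local Notation reach_prob := (reach_prob fin fail val).

Definition harmonic_off (A : pred S) (h : S -> R) : Prop :=
  forall t, ~~ target t -> t \notin A -> h t = \sum_u val t u * h u.

Lemma val_ge0 s t : ~~ target s -> 0 <= val s t.
Proof.
move=> /val_gp[val_gt0 val_eq0 _].
by case: (boolP (E s t)) => [/val_gt0/ltW | /val_eq0->].
Qed.

Lemma sum_val s : ~~ target s -> \sum_t val s t = 1.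
Proof. by case/val_gp. Qed.

Lemma reachn_ge0 (A : pred S) n t : 0 <= reachn A n t.
Proof.
elim: n t => [|n IHn] t /=; first by case: ifP.
case: ifP => // _; case: ifPn => // nt.
by apply: sumr_ge0 => u _; rewrite mulr_ge0 ?val_ge0.
Qed.

Lemma reachn_le1 (A : pred S) n t : reachn A n t <= 1.
Proof.
elim: n t => [|n IHn] t /=; first by case: ifP.
case: ifP => // _; case: ifPn => // nt.
rewrite -(sum_val nt); apply: ler_sum => u _.
by rewrite ler_piMr ?val_ge0.
Qed.

Lemma reachn_nondecreasing (A : pred S) t :
  nondecreasing_seq (fun n => reachn A n t).
Proof.
apply/nondecreasing_seqP => n; elim: n t => [|n IHn] t.
  rewrite [reachn _ 0 _]/=; case: ifP => [tA | _]; last exact: reachn_ge0.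
  by rewrite /= tA.
rewrite [reachn _ n.+1 _]/= [reachn _ n.+2 _]/=.
case: ifP => // _; case: ifPn => // nt.
by apply: ler_sum => u _; rewrite ler_wpM2l ?val_ge0.
Qed.

Lemma reachn_cvg (A : pred S) t :
  (fun n => reachn A n t) @ \oo --> reach_prob A t.
Proof.
apply: nondecreasing_is_cvgn; first exact: reachn_nondecreasing.
by exists 1 => _ [n _ <-]; apply: reachn_le1.
Qed.

Lemma reach_prob_ge0 (A : pred S) t : 0 <= reach_prob A t.
Proof.
by apply: limr_ge; [apply/cvg_ex; exists (reach_prob A t); apply: reachn_cvg
  | apply: nearW => n; apply: reachn_ge0].
Qed.

Lemma reach_prob_le1 (A : pred S) t : reach_prob A t <= 1.
Proof.
by apply: limr_le; [apply/cvg_ex; exists (reach_prob A t); apply: reachn_cvg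
  | apply: nearW => n; apply: reachn_le1].
Qed.

Lemma reach_prob_harmonic (A : pred S) : harmonic_off A (reach_prob A).
Proof.
move=> t nt tA; apply: cvg_lim => //; rewrite -cvg_shiftS /=.
under eq_cvg do rewrite /= (negbTE tA) (negbTE nt).
apply: cvg_big => [|u _]; first exact: add_continuous.
by apply: cvgM; [apply: cvg_cst | apply: reachn_cvg].
Qed.

Lemma dist_le_reachn (A : pred S) (h : S -> R) (c : R) :
    (forall t, `|h t - c| <= 1) -> {in A, forall a, h a = c} ->
    harmonic_off A h ->
  forall n t, `|h t - c| <= 1 - reachn A n t.
Proof.
move=> h_near_c hA h_harmonic; elim=> [|n IHn] t; rewrite [reachn _ _ _]/=.
  by case: ifP => [tA | _]; [rewrite hA // !subrr normr0 | rewrite subr0].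
case: ifPn => [tA | tA]; first by rewrite hA // !subrr normr0.
case: ifPn => [_ | nt]; first by rewrite subr0.
have -> : h t - c = \sum_u val t u * (h u - c).
  rewrite h_harmonic // (eq_bigr _ (fun u _ => mulrBr _ _ _)) sumrB.
  by rewrite -mulr_suml sum_val // mul1r.
apply: le_trans (ler_norm_sum _ _ _) _.
rewrite -[1 in leRHS](sum_val nt) -sumrB; apply: ler_sum => u _.
rewrite normrM ger0_norm ?val_ge0 // -{2}(mulr1 (val t u)) -mulrBr.
by rewrite ler_wpM2l ?val_ge0.
Qed.

Lemma eq_of_reach_prob1 (A : pred S) (h : S -> R) (c : R) s :
    (forall t, `|h t - c| <= 1) -> {in A, forall a, h a = c} ->
    harmonic_off A h ->
  reach_prob A s = 1 -> h s = c.
Proof.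
move=> h_near_c hA h_harmonic reach1.
have : reach_prob A s <= 1 - `|h s - c|.
  apply: limr_le; first by apply/cvg_ex; exists (reach_prob A s); apply: reachn_cvg.
  by apply: nearW => n; have := dist_le_reachn h_near_c hA h_harmonic n s; lra.
by rewrite reach1 => ?; apply/eqP; rewrite -subr_eq0 -normr_le0; lra.
Qed.

Lemma Pval_harmonic t : ~~ target t ->
  Pval fin fail val t = \sum_u val t u * Pval fin fail val u.
Proof.
move=> nt; apply: reach_prob_harmonic => //.
by apply: contra nt; rewrite inE /Defs.target => ->.
Qed.

Lemma Pval_dist_le1 t t' : `|Pval fin fail val t - Pval fin fail val t'| <= 1.
Proof.
have := reach_prob_ge0 (pred1 fin) t; have := reach_prob_le1 (pred1 fin) t.
have := reach_prob_ge0 (pred1 fin) t'; have := reach_prob_le1 (pred1 fin) t'.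
by rewrite /Pval ler_norml; lra.
Qed.

End Valuation.

Theorem lemma14 (R : realType) (S : finType) (E : rel S) (fin fail : S)
  (HM : standing_assumptions R E fin fail)
  (s : S) (A : {set S}) (HA : nw_class R E fin fail A)
  (Hs : as_reaches R E fin fail s A) :
  s \in A.
Proof.
case: HA => s0 A_class; apply/A_class => val val_gp.
apply/esym/(eq_of_reach_prob1 val_gp (A := mem A)); last exact: Hs.
- by move=> t; apply: (Pval_dist_le1 val_gp).
- by move=> a /A_class s0_a; rewrite (s0_a val val_gp).
- by move=> t nt _; apply: (Pval_harmonic val_gp nt).
Qed.
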